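(* Let $G$ be a group in which every non-abelian subgroup $H$ satisfies $C_G(H)\le H$, and let $a\in G$ be a non-trivial element of infinite or odd order. If $x\in G$ satisfies $x^{-1}ax=a^{-1}$, then $x$ has finite order which is a power of $2$, and $C_G(\langle a,x\rangle)=\langle x^2\rangle$.
   Context: $C_G(H)$ denotes the centralizer of $H$ in $G$. *)

(* Abstract (possibly infinite) groups: MathComp's finGroupType only covers
   finite groups, while the statement concerns elements of infinite order. *)
From mathcomp Require Import all_boot.
Set Implicit Arguments. Unset Strict Implicit. Unset Printing Implicit Defensive.

Structure AbsGroup := {
  gcar :> Type;
  gmul : gcar -> gcar -> gcar;
  gone : gcar;
  ginv : gcar -> gcar;
  gmulA : forall x y z, gmul x (gmul y z) = gmul (gmul x y) z;
  gmul1 : forall x, gmul gone x = x;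
  gmulV : forall x, gmul (ginv x) x = gone
}.

Section GroupDefs.
Variable G : AbsGroup.

Fixpoint gpow (x : G) (n : nat) : G :=
  match n with 0 => gone G | S k => gmul x (gpow x k) end.

Definition is_subgroup (H : G -> Prop) : Prop :=
  H (gone G) /\ (forall x y, H x -> H y -> H (gmul x y)) /\
  (forall x, H x -> H (ginv x)).

Definition abelian (H : G -> Prop) : Prop :=
  forall x y, H x -> H y -> gmul x y = gmul y x.

Definition centralizer (H : G -> Prop) : G -> Prop :=
  fun g => forall h, H h -> gmul g h = gmul h g.

Definition generated (S : G -> Prop) : G -> Prop :=
  fun g => forall K, is_subgroup K -> (forall s, S s -> K s) -> K g.

Definition has_order (x : G) (n : nat) : Prop :=
  0 < n /\ gpow x n = gone G /\ (forall m, 0 < m -> gpow x m = gone G -> n <= m).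

Definition infinite_order (x : G) : Prop :=
  forall n, 0 < n -> gpow x n <> gone G.

End GroupDefs.

(* Since x inverts a, x^2 centralizes <a, x>, and more generally every odd power x^m
   inverts a.  As a has no 2-torsion, a <> a^-1, so <a, x^m> is non-abelian for odd m;
   the hypothesis on G then puts x^2 into <a, x^m>, whose elements all have the form
   a^i x^(m j).  Writing x^2 = a^i x^(m j), the element a^i = x^(2 - m j) commutes with x
   while being inverted by it, hence is trivial: x^(2 - m j) = 1.  Taking m = 3 shows x has
   finite order n, and taking m an odd divisor q of n gives q | 2, so n is a power of 2.
   The same normal form a^i x^j identifies the centralizer of <a, x> with <x^2>. *)
From Stdlib Require Import Classical.
From mathcomp Require Import all_boot all_algebra zify.
Set Implicit Arguments. Unset Strict Implicit. Unset Printing Implicit Defensive.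
Import GRing.Theory Num.Theory.

Local Notation "x ** y" := (gmul x y) (at level 40, left associativity).
Local Notation one := (gone _).

Lemma pow2_of_odd_divisors n : 0 < n ->
  (forall q, odd q -> q %| n -> q = 1) -> exists k, n = 2 ^ k.
Proof.
move=> n_gt0 odd1; exists (logn 2 n).
have q1 : n`_(2^') = 1 by apply: odd1; [rewrite odd_2'nat part_pnat | exact: dvdn_part].
by rewrite -p_part -{1}(partnC 2 n_gt0) q1 muln1.
Qed.

Lemma int_even_or_odd (j : int) : exists t, (j = 2 * t \/ j = 2 * t + 1)%R.
Proof.
exists (j %/ 2)%Z; have := divz_eq j 2.
have := modz_ge0 j (isT : (2 : int) != 0); have := ltz_mod j (isT : (2 : int) != 0).
by rewrite /=; lia.
Qed.

Section GroupLaws.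
Variable G : AbsGroup.
Implicit Types x y z : G.

Lemma mulgV x : x ** ginv x = one.
Proof.
rewrite -[x ** _]gmul1 -[X in X ** (x ** _)](gmulV (ginv x)).
by rewrite -gmulA (gmulA (ginv x)) gmulV gmul1 gmulV.
Qed.

Lemma mulg1 x : x ** one = x.
Proof. by rewrite -(gmulV x) gmulA mulgV gmul1. Qed.

Lemma mulKg x y : ginv x ** (x ** y) = y.
Proof. by rewrite gmulA gmulV gmul1. Qed.

Lemma mulgK x y : y ** x ** ginv x = y.
Proof. by rewrite -gmulA mulgV mulg1. Qed.

Lemma mulgKV x y : y ** ginv x ** x = y.
Proof. by rewrite -gmulA gmulV mulg1. Qed.

Lemma mulgI x y z : x ** y = x ** z -> y = z.
Proof. by move=> e; rewrite -(mulKg x y) e mulKg. Qed.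

Lemma mulIg x y z : y ** x = z ** x -> y = z.
Proof. by move=> e; rewrite -(mulgK x y) e mulgK. Qed.

Lemma invg_uniq x y : x ** y = one -> y = ginv x.
Proof. by move=> e; apply: (mulgI (x := x)); rewrite e mulgV. Qed.

Lemma invgK x : ginv (ginv x) = x.
Proof. by symmetry; apply: invg_uniq; rewrite gmulV. Qed.

Lemma invMg x y : ginv (x ** y) = ginv y ** ginv x.
Proof. by symmetry; apply: invg_uniq; rewrite -gmulA (gmulA y) mulgV gmul1 mulgV. Qed.

Lemma invg1 : ginv (gone G) = one.
Proof. by symmetry; apply: invg_uniq; rewrite mulg1. Qed.

End GroupLaws.

Section IntegerPowers.
Variable G : AbsGroup.
Implicit Types (b c g x : G) (i j k : int).
Local Open Scope ring_scope.

Definition zpow x k : G :=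
  match k with Posz n => gpow x n | Negz n => ginv (gpow x n.+1) end.

Lemma zpow0 x : zpow x 0 = one.
Proof. by []. Qed.

Lemma zpow1 x : zpow x 1 = x.
Proof. exact: mulg1. Qed.

Lemma gpowD x m n : gpow x (m + n) = gpow x m ** gpow x n.
Proof. by elim: m => [|m IH] /=; rewrite ?gmul1 // IH gmulA. Qed.

Lemma zpowSr x k : zpow x (k + 1) = zpow x k ** x.
Proof.
case: k => [n|[|n]].
- have -> : Posz n + 1 = Posz n.+1 by lia.
  by rewrite -[n.+1]addn1 /= gpowD /= mulg1.
- by rewrite /= mulg1 gmulV.
- have -> : Negz n.+1 + 1 = Negz n by rewrite !NegzE; lia.
  by rewrite /= (invMg x (x ** _)) mulgKV.
Qed.

Lemma zpowBr x k : zpow x (k - 1) = zpow x k ** ginv x.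
Proof. by rewrite -[in RHS](subrK 1 k) zpowSr mulgK. Qed.

Lemma zpowN x k : zpow x (- k) = ginv (zpow x k).
Proof. by case: k => [[|n]|n] /=; rewrite ?invg1 ?invgK. Qed.

Lemma zpowD x i j : zpow x (i + j) = zpow x i ** zpow x j.
Proof.
case: j => n; elim: n => [|n IH].
- by rewrite addr0 mulg1.
- by rewrite -addn1 PoszD addrA !zpowSr IH gmulA.
- have -> : Negz 0 = 0 - 1 by [].
  by rewrite addrA !zpowBr addr0 zpow0 gmul1.
- have -> : Negz n.+1 = Negz n - 1 by rewrite !NegzE; lia.
  by rewrite addrA !zpowBr IH gmulA.
Qed.

Lemma zpowM x i j : zpow (zpow x i) j = zpow x (i * j).
Proof.
have gpowM n : gpow (zpow x i) n = zpow x (i * n%:Z).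
  elim: n => [|n IH]; first by rewrite mulr0.
  by rewrite [LHS]/= IH -addn1 PoszD mulrDr mulr1 addrC zpowD.
case: j => n; first exact: gpowM.
by rewrite NegzE mulrN !zpowN -gpowM.
Qed.

Lemma zpowC x k : zpow x k ** x = x ** zpow x k.
Proof. by rewrite -zpowSr addrC zpowD zpow1. Qed.

Lemma zpow1g k : zpow (gone G) k = one.
Proof.
have gpow1g n : gpow (gone G) n = one by elim: n => //= n ->; rewrite gmul1.
by case: k => n; rewrite /zpow gpow1g ?invg1.
Qed.

Lemma zpow_conj g b c k : g ** b = c ** g -> g ** zpow b k = zpow c k ** g.
Proof.
move=> gb; have gpow_conj n : g ** gpow b n = gpow c n ** g.
  by elim: n => [|n IH] /=; rewrite ?gmul1 ?mulg1 // gmulA gb -gmulA IH gmulA.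
case: k => n; first exact: gpow_conj.
apply: (mulgI (x := gpow c n.+1)).
by rewrite [RHS]gmulA mulgV gmul1 gmulA -gpow_conj mulgK.
Qed.

Lemma zpow_invg b k : zpow (ginv b) k = zpow b (- k).
Proof. by rewrite -{1}(zpow1 b) -zpowN zpowM mulN1r. Qed.

End IntegerPowers.

Section Subgroups.
Variable G : AbsGroup.
Implicit Types (S K H : G -> Prop) (g : G).

Lemma generated_subgroup S : is_subgroup (generated S).
Proof.
split; first by move=> K [].
split=> [x y Sx Sy|x Sx] K subK SK; have [_ [KM KV]] := subK.
  by apply: KM; [apply: Sx | apply: Sy].
by apply: KV; apply: Sx.
Qed.

Lemma mem_generated S s : S s -> generated S s.
Proof. by move=> Ss K _; apply. Qed.

Lemma generated_sub S K : is_subgroup K -> (forall s, S s -> K s) ->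
  forall g, generated S g -> K g.
Proof. by move=> subK SK g; apply. Qed.

Lemma subgroup_zpow K h k : is_subgroup K -> K h -> K (zpow h k).
Proof.
move=> [K1 [KM KV]] Kh.
have Kgpow n : K (gpow h n) by elim: n => //= n; apply: KM.
by case: k => n; [apply: Kgpow | apply: KV].
Qed.

Lemma centralizer_subgroup H : is_subgroup (centralizer H).
Proof.
split; first by move=> h _; rewrite gmul1 mulg1.
split=> [x y Cx Cy h Hh|x Cx h Hh]; first by rewrite -gmulA Cy // !gmulA Cx.
by have := zpow_conj (-1) (esym (Cx h Hh)); rewrite zpowN zpow1.
Qed.

Lemma centralizer_generated S g : (forall s, S s -> g ** s = s ** g) ->
  centralizer (generated S) g.
Proof.
move=> Cg h Sh.
have Cgh : centralizer (fun y => y = g) h.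
  by apply: (generated_sub (centralizer_subgroup _) _ Sh) => s Ss _ ->; rewrite Cg.
exact/esym/Cgh.
Qed.

End Subgroups.

Section Orders.
Variable G : AbsGroup.
Implicit Types (x : G) (k : int).
Local Open Scope ring_scope.

Lemma zpow_eq1_gpow x k : zpow x k = one -> k <> 0 ->
  exists2 N, (0 < N)%N & gpow x N = one.
Proof.
case: k => [[|n]|n] //= xk _; first by exists n.+1.
by exists n.+1; rewrite // -(invgK (gpow x n.+1)) xk invg1.
Qed.

Lemma has_order_exists x N : (0 < N)%N -> gpow x N = one -> exists n, has_order x n.
Proof.
elim/ltn_ind: N => N IH N_gt0 xN.
case: (classic (exists m, [/\ 0 < m, m < N & gpow x m = one]%N)).
  by case=> m [m_gt0 ltmN xm]; apply: (IH m).
move=> Nmin; exists N; do 2!split=> //; move=> m m_gt0 xm.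
by rewrite leqNgt; apply/negP=> ltmN; apply: Nmin; exists m.
Qed.

Lemma has_order_zpow_eq1 x n k : has_order x n -> zpow x k = one <-> (n%:Z %| k)%Z.
Proof.
move=> [n_gt0 [xn nmin]].
have x_nmul q : zpow x (n%:Z * q) = one by rewrite -zpowM [zpow x n]/= xn zpow1g.
split=> [xk|/dvdzP[q ->]]; last by rewrite mulrC x_nmul.
have n_neq0 : n%:Z != 0 by rewrite eqz_nat -lt0n.
have xr : zpow x (k %% n%:Z)%Z = one.
  by move: xk; rewrite {1}(divz_eq k n%:Z) mulrC zpowD x_nmul gmul1.
apply/dvdz_mod0P; move: (modz_ge0 k n_neq0) (ltz_mod k n_neq0) xr.
case: (k %% n%:Z)%Z => [[|r]|//] //= _ ltrn xr.
by have := nmin r.+1 isT xr; move: ltrn; rewrite ltz_nat; lia.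
Qed.

Lemma zpow_double_eq1 x i : infinite_order x \/ (exists n, odd n /\ has_order x n) ->
  zpow x (2 * i) = one -> zpow x i = one.
Proof.
case=> [x_inf|[n [odd_n xn]]] x2i.
  case: (i =P 0) => [-> //|i_neq0].
  by have [|N N_gt0 /(x_inf N N_gt0)] := zpow_eq1_gpow x2i; first by lia.
apply/(has_order_zpow_eq1 i xn); move/(has_order_zpow_eq1 (2 * i) xn): x2i.
by rewrite Gauss_dvdzr // coprimezE /= coprimen2.
Qed.

End Orders.

Section InvertedElement.
Variable G : AbsGroup.
Variables a x : G.
Hypothesis a_neq1 : a <> one.
Hypothesis a_halve : forall i, zpow a (2 * i) = one -> zpow a i = one.
Hypothesis x_inverts_a : ginv x ** a ** x = ginv a.
Local Open Scope ring_scope.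

Lemma invg_neq_self : ginv a <> a.
Proof.
move=> aVa; apply: a_neq1; rewrite -(zpow1 a); apply: a_halve.
by rewrite [LHS]/= mulg1 -{2}aVa mulgV.
Qed.

Lemma x_conjV : x ** ginv a = a ** x.
Proof. by rewrite -x_inverts_a !gmulA mulgV gmul1. Qed.

Lemma x_conj : x ** a = ginv a ** x.
Proof.
by have := zpow_conj (-1) x_conjV; rewrite zpow_invg opprK zpow1 zpowN zpow1.
Qed.

Lemma xpow_even_commute t k :
  zpow x (2 * t) ** zpow a k = zpow a k ** zpow x (2 * t).
Proof.
have x2a : a ** zpow x 2 = zpow x 2 ** a.
  by rewrite /= !mulg1 -gmulA x_conj [RHS]gmulA x_conjV -gmulA.
by apply: zpow_conj; rewrite -zpowM; symmetry; apply: zpow_conj.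
Qed.

Lemma xpow_odd_conj t k :
  zpow x (2 * t + 1) ** zpow a k = zpow a (- k) ** zpow x (2 * t + 1).
Proof.
rewrite -zpow_invg; apply: zpow_conj.
have := xpow_even_commute t (-1); rewrite zpowN zpow1 => x2tV.
by rewrite zpowD zpow1 -gmulA x_conj !gmulA x2tV.
Qed.

Lemma xpow_conj j : exists e, forall k, zpow x j ** zpow a k = zpow a (e * k) ** zpow x j.
Proof.
have [t [->|->]] := int_even_or_odd j.
  by exists 1 => k; rewrite mul1r xpow_even_commute.
by exists (-1) => k; rewrite mulN1r xpow_odd_conj.
Qed.

Lemma xpow_odd_not_commute t : zpow x (2 * t + 1) ** a <> a ** zpow x (2 * t + 1).
Proof.
have := xpow_odd_conj t 1; rewrite zpow1 zpowN zpow1 => -> /mulIg.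
exact: invg_neq_self.
Qed.

Lemma apow_commute_eq1 i : zpow a i ** x = x ** zpow a i -> zpow a i = one.
Proof.
have := xpow_odd_conj 0 i; rewrite mulr0 add0r zpow1 => -> /mulIg aNi.
apply: a_halve; have -> : 2 * i = i - - i by lia.
by rewrite zpowD zpowN -aNi mulgV.
Qed.

Definition apow_xpow (m : int) : G -> Prop :=
  fun g => exists i j, g = zpow a i ** zpow x (m * j).

Lemma apow_xpow_subgroup m : is_subgroup (apow_xpow m).
Proof.
split; first by exists 0, 0; rewrite mulr0 gmul1.
split=> [g h [i [j ->]] [k [l ->]]|g [i [j ->]]].
  have [e xe] := xpow_conj (m * j).
  exists (i + e * k), (j + l).
  by rewrite -gmulA (gmulA (zpow x _)) xe mulrDr !zpowD !gmulA.
have [e xe] := xpow_conj (m * - j).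
by exists (e * - i), (- j); rewrite invMg -!zpowN -xe mulrN.
Qed.

Section Generators.
Variable m : int.
Variable S : G -> Prop.
Hypothesis S_def : forall y, S y <-> y = a \/ y = zpow x m.

Lemma generated_apow_xpow g : generated S g -> apow_xpow m g.
Proof.
apply: generated_sub => [|s /S_def[->|->]]; first exact: apow_xpow_subgroup.
  by exists 1, 0; rewrite mulr0 zpow1 mulg1.
by exists 0, 1; rewrite mulr1 gmul1.
Qed.

Lemma centralizer_generated_x2 : centralizer (generated S) (zpow x 2).
Proof.
apply: centralizer_generated => s /S_def[->|->].
  by have := xpow_even_commute 1 1; rewrite mulr1 zpow1.
by rewrite -!zpowD addrC.
Qed.

Lemma generated_not_abelian t : m = 2 * t + 1 -> ~ abelian (generated S).
Proof.
move=> m_odd Sab; apply: (xpow_odd_not_commute (t := t)); rewrite -m_odd.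
by apply: Sab; apply: mem_generated; apply/S_def; [right | left].
Qed.

End Generators.

Hypothesis centralizer_sub : forall H : G -> Prop, is_subgroup H -> ~ abelian H ->
  forall g, centralizer H g -> H g.

Lemma xpow_odd_eq1 m t : m = 2 * t + 1 -> exists j, zpow x (2 - m * j) = one.
Proof.
move=> m_odd; pose S y := y = a \/ y = zpow x m.
have S_def y : S y <-> y = a \/ y = zpow x m by [].
have [|i [j x2]] := generated_apow_xpow S_def (g := zpow x 2).
  apply: centralizer_sub (centralizer_generated_x2 S_def).
    exact: generated_subgroup.
  exact: (generated_not_abelian S_def m_odd).
have ai : zpow a i = zpow x (2 - m * j) by rewrite zpowD zpowN x2 mulgK.
by exists j; rewrite -ai; apply: apow_commute_eq1; rewrite ai zpowC.
Qed.

Lemma x_order_pow2 : exists k, has_order x (2 ^ k).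
Proof.
have [j x2j] := xpow_odd_eq1 (t := 1) erefl.
have [|N N_gt0 xN] := zpow_eq1_gpow x2j; first by lia.
have [n xn] := has_order_exists N_gt0 xN.
suff [k n2k] : exists k, n = (2 ^ k)%N by exists k; rewrite -n2k.
apply: pow2_of_odd_divisors => [|q odd_q q_n]; first by case: xn.
have q_oddE : q%:Z = 2 * (q./2)%:Z + 1 by rewrite -[q in LHS]odd_double_half odd_q; lia.
have [l x2l] := xpow_odd_eq1 q_oddE.
have : (q%:Z %| 2 - q%:Z * l)%Z.
  by apply: (@dvdz_trans n%:Z); [exact: q_n | apply/(has_order_zpow_eq1 _ xn)].
by rewrite rpredBr ?dvdz_mulr // dvdzE /= => /dvdn_leq-/(_ isT); lia.
Qed.

Lemma centralizer_generated_ax g :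
  centralizer (generated (fun y => y = a \/ y = x)) g <->
  generated (fun y => y = gpow x 2) g.
Proof.
have S_def y : y = a \/ y = x <-> y = a \/ y = zpow x 1 by rewrite zpow1.
split=> [Cg|x2g]; last first.
  apply: (generated_sub (centralizer_subgroup _) _ x2g) => _ ->.
  exact: (centralizer_generated_x2 S_def).
have [i [j g_ij]] : apow_xpow 1 g.
  apply: (generated_apow_xpow S_def); apply: centralizer_sub Cg.
    exact: generated_subgroup.
  exact: (generated_not_abelian (t := 0) S_def).
rewrite {}g_ij mul1r in Cg *.
have ai1 : zpow a i = one.
  apply: apow_commute_eq1; apply: (mulIg (x := zpow x j)).
  have := Cg x (mem_generated (or_intror erefl)).
  by rewrite -gmulA zpowC !gmulA.
rewrite {}ai1 gmul1 in Cg *.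
have [t [j_even|j_odd]] := int_even_or_odd j.
  rewrite j_even -zpowM.
  by apply: (subgroup_zpow _ (generated_subgroup _)); apply: mem_generated.
case: (xpow_odd_not_commute (t := t)); rewrite -j_odd.
exact: Cg (mem_generated (or_introl erefl)).
Qed.

End InvertedElement.

Theorem lemma2p6 (G : AbsGroup)
  (hG : forall H : G -> Prop, is_subgroup H -> ~ abelian H ->
          forall g, centralizer H g -> H g)
  (a x : G)
  (ha1 : a <> gone G)
  (hao : infinite_order a \/ exists n, odd n /\ has_order a n)
  (hx : gmul (gmul (ginv x) a) x = ginv a) :
  (exists k, has_order x (2 ^ k)) /\
  (forall g, centralizer (generated (fun y => y = a \/ y = x)) g <->
             generated (fun y => y = gpow x 2) g).
Proof.
have a_halve i : zpow a (2 * i) = one -> zpow a i = one by exact: zpow_double_eq1.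
split; first exact: x_order_pow2 ha1 a_halve hx hG.
exact: centralizer_generated_ax ha1 a_halve hx hG.
Qed.
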